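(* Let $a\geq b>0$, $k\geq 1$, and let $\alpha,\beta,t$ be real numbers with $\alpha+\beta t>0$. Then \[ \frac{ka\gamma-b\gamma}{k}+\frac{b}{k}\ln k + \frac{a-b}{\alpha+\beta t}+a\psi(\alpha+\beta t)-b\psi_k(\alpha+\beta t)\geq 0 . \]
   Context: $\gamma$ denotes the Euler–Mascheroni constant and $\psi(t)=\Gamma'(t)/\Gamma(t)$ is the digamma function for $t>0$, where $\Gamma$ is Euler's Gamma function. For $k>0$ and $t>0$, the $k$-Gamma function is $\Gamma_k(t)=\int_0^\infty e^{-x^k/k}x^{t-1}\,dx$, and $\psi_k(t)=\frac{d}{dt}\ln\Gamma_k(t)=\Gamma_k'(t)/\Gamma_k(t)$. *)

From Stdlib Require Import Reals.
From Coquelicot Require Import Coquelicot.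
Open Scope R_scope.

Definition euler_gamma : R :=
  real (Lim_seq (fun n : nat => sum_f_R0 (fun i => / INR (S i)) n - ln (INR (S n)))).

Definition Gamma (t : R) : R :=
  RInt_gen (fun x => exp (- x) * Rpower x (t - 1)) (at_right 0) (Rbar_locally p_infty).

Definition psi (t : R) : R := Derive Gamma t / Gamma t.

Definition Gamma_k (k t : R) : R :=
  RInt_gen (fun x => exp (- (Rpower x k) / k) * Rpower x (t - 1))
           (at_right 0) (Rbar_locally p_infty).

Definition psi_k (k t : R) : R := Derive (Gamma_k k) t / Gamma_k k t.

(* By Hoelder's inequality [Gamma] is log-convex on (0, +oo). Hence it is convex, has a
   right derivative (which is all that Coquelicot's [Derive] looks at), and
   [psi = Gamma' / Gamma] is nondecreasing and squeezed between slopes of [ln Gamma].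
   With [Gamma (x + 1) = x Gamma x] this gives [psi (x + 1) = psi x + 1 / x] and
   [ln x <= psi (x + 1)], whence [psi 1 >= - euler_gamma]. The substitution [u = s ^ k / k]
   gives [Gamma_k k t = k ^ (t / k - 1) Gamma (t / k)], so [psi_k k x = (ln k + psi (x / k)) / k].
   For [x = alpha + beta t] the left-hand side then equals
   [a (euler_gamma + psi (x + 1)) - (b / k) (euler_gamma + psi (x / k + 1))], where
   [0 <= euler_gamma + psi (x / k + 1) <= euler_gamma + psi (x + 1)] and [0 < b / k <= a]. *)

From Stdlib Require Import Reals Lra Lia Psatz Classical.
From Coquelicot Require Import Coquelicot.
Open Scope R_scope.

Lemma exp_le x y : x <= y -> exp x <= exp y.
Proof. intros [Hlt | ->]; [left; now apply exp_increasing | right; reflexivity]. Qed.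

Lemma exp_convex lam X Y : 0 <= lam <= 1 ->
  exp (lam * X + (1 - lam) * Y) <= lam * exp X + (1 - lam) * exp Y.
Proof.
  intros Hlam. set (m := lam * X + (1 - lam) * Y).
  assert (HX : exp m * (1 + (X - m)) <= exp X).
  { rewrite <- (Rplus_minus m X) at 2. rewrite exp_plus.
    apply Rmult_le_compat_l; [apply Rlt_le, exp_pos | apply exp_ineq1_le]. }
  assert (HY : exp m * (1 + (Y - m)) <= exp Y).
  { rewrite <- (Rplus_minus m Y) at 2. rewrite exp_plus.
    apply Rmult_le_compat_l; [apply Rlt_le, exp_pos | apply exp_ineq1_le]. }
  assert (lam * (exp m * (1 + (X - m))) + (1 - lam) * (exp m * (1 + (Y - m))) = exp m)
    by (unfold m; ring).
  nra.
Qed.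

Lemma exp_neg_mul_pow_le n s : 0 < s -> exp (- s) * s ^ n <= INR n ^ n.
Proof.
  intros Hs. destruct n as [|n].
  { simpl. rewrite Rmult_1_r, <- exp_0. left. apply exp_increasing. lra. }
  set (N := INR (S n)). assert (HN : 0 < N) by (apply lt_0_INR; lia).
  assert (H : (s / N) ^ S n <= exp (s / N) ^ S n).
  { apply pow_incr. split; [apply Rlt_le, Rdiv_lt_0_compat; lra|].
    pose proof (exp_ineq1_le (s / N)). lra. }
  rewrite <- (Rpower_pow _ (exp _)) in H by apply exp_pos.
  unfold Rpower in H at 1. rewrite ln_exp in H. fold N in H.
  replace (N * (s / N)) with s in H by (field; lra).
  unfold Rdiv in H. rewrite Rpow_mult_distr, pow_inv in H.
  rewrite exp_Ropp. apply (Rmult_le_reg_l (exp s)); [apply exp_pos|].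
  rewrite <- Rmult_assoc, Rinv_r, Rmult_1_l by (apply Rgt_not_eq, exp_pos).
  assert (HNn : 0 < N ^ S n) by (apply pow_lt; lra).
  apply (Rmult_le_compat_r (N ^ S n)) in H; [|lra].
  rewrite Rmult_assoc, Rinv_l in H by lra. lra.
Qed.

Lemma Rpower_pos x y : 0 < Rpower x y.
Proof. apply exp_pos. Qed.

Lemma Rpower_minus_1 s c : 0 < s -> Rpower s (c - 1) = Rpower s c / s.
Proof.
  intros Hs. unfold Rminus. rewrite Rpower_plus, Rpower_Ropp, Rpower_1 by exact Hs.
  reflexivity.
Qed.

Lemma is_derive_Rpower c s : 0 < s -> is_derive (fun s => Rpower s c) s (c * Rpower s (c - 1)).
Proof. intros Hs. apply is_derive_Reals, derivable_pt_lim_power, Hs. Qed.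

Lemma continuous_Rpower c s : 0 < s -> continuous (fun s => Rpower s c) s.
Proof.
  intros Hs. apply (ex_derive_continuous (K := R_AbsRing) (V := R_NormedModule)).
  eexists. now apply is_derive_Rpower.
Qed.

Lemma exp_neg_mul_Rpower_bounded x :
  exists C, forall s, 0 <= s -> exp (- s) * Rpower (1 + s) x <= C.
Proof.
  destruct (INR_archimed 1 x ltac:(lra)) as [n Hn]. exists (exp 1 * INR n ^ n).
  intros s Hs.
  assert (Hpow : Rpower (1 + s) x <= (1 + s) ^ n).
  { rewrite <- Rpower_pow by lra. apply Rle_Rpower; lra. }
  pose proof (exp_neg_mul_pow_le n (1 + s) ltac:(lra)).
  replace (exp (- s)) with (exp 1 * exp (- (1 + s))) by (rewrite <- exp_plus; f_equal; ring).
  rewrite Rmult_assoc. apply Rmult_le_compat_l; [apply Rlt_le, exp_pos|].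
  eapply Rle_trans; [| eassumption]. apply Rmult_le_compat_l; [apply Rlt_le, exp_pos | exact Hpow].
Qed.

Section Limits.

Context {T : Type} {F : (T -> Prop) -> Prop} {FF : Filter F}.

Lemma filterlim_Rplus (f g : T -> R) (l m : R) :
  filterlim f F (locally l) -> filterlim g F (locally m) ->
  filterlim (fun x => f x + g x) F (locally (l + m)).
Proof.
  intros Hf Hg. eapply filterlim_comp_2; [exact Hf | exact Hg |].
  now apply (filterlim_Rbar_plus l m (l + m)).
Qed.

Lemma filterlim_Rmult (f g : T -> R) (l m : R) :
  filterlim f F (locally l) -> filterlim g F (locally m) ->
  filterlim (fun x => f x * g x) F (locally (l * m)).
Proof.
  intros Hf Hg. eapply filterlim_comp_2; [exact Hf | exact Hg |].
  now apply (filterlim_Rbar_mult l m (l * m)).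
Qed.

End Limits.

Lemma filterlim_Rpower_at_right_0 x : 0 < x ->
  filterlim (fun s => Rpower s x) (at_right 0) (at_right 0).
Proof.
  intros Hx P [eps HP]. exists (mkposreal _ (Rpower_pos eps (/ x))). intros s Hs Hpos.
  change (Rabs (s - 0) < Rpower eps (/ x)) in Hs. apply Rabs_lt_between in Hs.
  apply HP; [| apply Rpower_pos]. change (Rabs (Rpower s x - 0) < eps).
  rewrite Rminus_0_r, Rabs_pos_eq by apply Rlt_le, Rpower_pos.
  replace (pos eps) with (Rpower (Rpower eps (/ x)) x)
    by (rewrite Rpower_mult, Rinv_l, Rpower_1 by (try apply cond_pos; lra); reflexivity).
  apply Rlt_Rpower_l; lra.
Qed.

Lemma filterlim_Rpower_pinfty x : 0 < x ->
  filterlim (fun s => Rpower s x) (Rbar_locally p_infty) (Rbar_locally p_infty).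
Proof.
  intros Hx P [M HP]. exists (Rpower (Rmax M 1) (/ x)). intros s Hs. apply HP.
  pose proof (Rpower_pos (Rmax M 1) (/ x)). pose proof (Rmax_l M 1). pose proof (Rmax_r M 1).
  apply (Rle_lt_trans _ (Rmax M 1)); [lra|].
  replace (Rmax M 1) with (Rpower (Rpower (Rmax M 1) (/ x)) x) at 1
    by (rewrite Rpower_mult, Rinv_l, Rpower_1 by lra; reflexivity).
  apply Rlt_Rpower_l; lra.
Qed.

Lemma filterlim_div_at_right_0 c : 0 < c -> filterlim (fun h => h / c) (at_right 0) (at_right 0).
Proof.
  intros Hc P [eps HP].
  exists (mkposreal (eps * c) ltac:(apply Rmult_lt_0_compat; [apply cond_pos | exact Hc])).
  intros h Hh Hpos. change (Rabs (h - 0) < eps * c) in Hh. apply Rabs_lt_between in Hh.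
  apply HP; [| apply Rdiv_lt_0_compat; lra].
  change (Rabs (h / c - 0) < eps).
  rewrite Rminus_0_r, Rabs_pos_eq by (apply Rlt_le, Rdiv_lt_0_compat; lra).
  apply (Rmult_lt_reg_r c); [exact Hc|]. unfold Rdiv. rewrite Rmult_assoc, Rinv_l by lra. lra.
Qed.

Lemma filterlim_div_pinfty c : 0 < c ->
  filterlim (fun h => h / c) (Rbar_locally p_infty) (Rbar_locally p_infty).
Proof.
  intros Hc P [M HP]. exists (M * c). intros h Hh. apply HP.
  apply (Rmult_lt_reg_r c); [exact Hc|]. unfold Rdiv. rewrite Rmult_assoc, Rinv_l by lra. lra.
Qed.

Lemma filterlim_exp_neg_mul_Rpower_at_right_0 x : 0 < x ->
  filterlim (fun s => exp (- s) * Rpower s x) (at_right 0) (locally 0).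
Proof.
  intros Hx.
  assert (Hexp : filterlim (fun s => exp (- s)) (at_right 0) (locally (exp (- 0)))).
  { eapply filterlim_filter_le_1; [apply filter_le_within|].
    apply (ex_derive_continuous (K := R_AbsRing) (V := R_NormedModule) (fun s => exp (- s))).
    auto_derive. exact I. }
  assert (Hpow : filterlim (fun s => Rpower s x) (at_right 0) (locally 0)).
  { eapply filterlim_filter_le_2; [apply filter_le_within|].
    now apply filterlim_Rpower_at_right_0. }
  pose proof (filterlim_Rmult _ _ _ _ Hexp Hpow) as H. now rewrite Rmult_0_r in H.
Qed.

Lemma filterlim_exp_neg_mul_Rpower_pinfty x :
  filterlim (fun s => exp (- s) * Rpower s x) (Rbar_locally p_infty) (locally 0).
Proof.
  destruct (exp_neg_mul_Rpower_bounded (Rabs x + 1)) as [C HC].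
  apply (filterlim_le_le (F := Rbar_locally p_infty) (fun _ => 0) _ (fun s => C * / s) (Finite 0)).
  - exists 1. intros s Hs.
    split; [apply Rlt_le, Rmult_lt_0_compat; [apply exp_pos | apply Rpower_pos]|].
    assert (Hle : Rpower s x <= Rpower (1 + s) (Rabs x + 1) / s).
    { replace (Rpower s x) with (Rpower s (x + 1) / s)
        by (rewrite <- Rpower_minus_1 by lra; f_equal; ring).
      unfold Rdiv. apply Rmult_le_compat_r; [apply Rlt_le, Rinv_0_lt_compat; lra|].
      apply (Rle_trans _ (Rpower s (Rabs x + 1))).
      - apply Rle_Rpower; [lra|]. pose proof (Rle_abs x). lra.
      - apply Rle_Rpower_l; [pose proof (Rabs_pos x); lra | lra]. }
    apply (Rle_trans _ (exp (- s) * (Rpower (1 + s) (Rabs x + 1) / s))).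
    + apply Rmult_le_compat_l; [apply Rlt_le, exp_pos | exact Hle].
    + unfold Rdiv. rewrite <- Rmult_assoc.
      apply Rmult_le_compat_r; [apply Rlt_le, Rinv_0_lt_compat; lra | apply HC; lra].
  - apply filterlim_const.
  - assert (Hinv : filterlim Rinv (Rbar_locally p_infty) (locally 0))
      by (apply (filterlim_Rbar_inv p_infty); discriminate).
    pose proof (filterlim_Rmult _ _ _ _ (filterlim_const C) Hinv) as H. now rewrite Rmult_0_r in H.
Qed.

Definition right_quotient (f : R -> R) (x h : R) := (f (x + h) - f x) / h.

Lemma right_quotient_of_is_derive f x l :
  is_derive f x l -> filterlim (right_quotient f x) (at_right 0) (locally l).
Proof.
  intros Hd%is_derive_Reals P [eps HP].
  destruct (Hd eps (cond_pos eps)) as [d Hdl].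
  exists d. intros h Hh Hpos. apply HP. apply Hdl; [lra|].
  rewrite <- (Rminus_0_r h). exact Hh.
Qed.

(* [Derive] samples the difference quotient along [h = 1 / (n + 1)], so a right limit suffices. *)
Lemma Derive_of_right_quotient f x D :
  filterlim (right_quotient f x) (at_right 0) (locally D) -> Derive f x = D.
Proof.
  intros HD. unfold Derive, Lim.
  assert (Hseq : filterlim (Rbar_loc_seq 0) eventually (at_right 0)).
  { intros P [eps HP]. unfold filtermap.
    apply (filter_imp (fun n => 0 < Rbar_loc_seq 0 n -> P (Rbar_loc_seq 0 n))).
    - intros n Hn. apply Hn. simpl. rewrite Rplus_0_l.
      apply Rinv_0_lt_compat. pose proof (pos_INR n). lra.
    - apply (filterlim_Rbar_loc_seq 0 (fun y => 0 < y -> P y)).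
      exists eps. intros y Hy _. exact (HP y Hy). }
  rewrite (is_lim_seq_unique _ D); [reflexivity|].
  exact (filterlim_comp _ _ _ _ _ _ _ _ Hseq HD).
Qed.

Lemma right_continuous_of_right_quotient f x D :
  filterlim (right_quotient f x) (at_right 0) (locally D) ->
  filterlim (fun h => f (x + h)) (at_right 0) (locally (f x)).
Proof.
  intros HD.
  assert (Hid : filterlim (fun h => h) (at_right 0) (locally 0)) by apply filter_le_within.
  pose proof (filterlim_Rplus _ _ _ _ (filterlim_const (f x)) (filterlim_Rmult _ _ _ _ Hid HD))
    as H.
  rewrite Rmult_0_l, Rplus_0_r in H. revert H. apply filterlim_ext_loc.
  exists (mkposreal 1 Rlt_0_1). intros h _ Hh. unfold right_quotient. field. lra.
Qed.

Lemma ex_right_lim_of_monotone (q : R -> R) (m : R) :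
  (forall h1 h2, 0 < h1 < h2 -> q h1 <= q h2) -> (forall h, 0 < h -> m <= q h) ->
  exists D, filterlim q (at_right 0) (locally D).
Proof.
  intros Hmono Hlow.
  set (E y := exists h, 0 < h /\ y = - q h).
  assert (HE : bound E) by (exists (- m); intros y [h [Hh ->]]; specialize (Hlow h Hh); lra).
  assert (HE1 : exists y, E y) by (exists (- q 1); exists 1; split; [lra | reflexivity]).
  destruct (completeness E HE HE1) as [M [HM HMleast]].
  exists (- M). intros P [eps HP].
  assert (Hh0 : exists h0, 0 < h0 /\ M - eps < - q h0).
  { apply NNPP. intros Hno. assert (Hub : is_upper_bound E (M - eps)).
    { intros y [h [Hh ->]]. apply Rnot_lt_le. intros Hlt. apply Hno. now exists h. }
    specialize (HMleast _ Hub). pose proof (cond_pos eps). lra. }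
  destruct Hh0 as [h0 [Hh0 Hq0]].
  exists (mkposreal h0 Hh0). intros h Hh Hpos. apply HP.
  assert (Hh' : h < h0).
  { change (Rabs (h - 0) < h0) in Hh. apply Rabs_lt_between in Hh. lra. }
  assert (Hup : - q h <= M) by (apply HM; now exists h).
  specialize (Hmono h h0 (conj Hpos Hh')).
  change (Rabs (q h - - M) < eps). apply Rabs_lt_between. lra.
Qed.

(** * Convex and log-convex functions on (0, +oo) *)

Definition convex_pos (F : R -> R) : Prop :=
  forall u v lam, 0 < u -> 0 < v -> 0 <= lam <= 1 ->
  F (lam * u + (1 - lam) * v) <= lam * F u + (1 - lam) * F v.

Definition slope (F : R -> R) (x y : R) : R := (F y - F x) / (y - x).

Lemma convex_comb_pos u v lam : 0 < u -> 0 < v -> 0 <= lam <= 1 -> 0 < lam * u + (1 - lam) * v.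
Proof. intros Hu Hv Hlam. destruct (Req_dec lam 0) as [-> | Hne]; [lra|]. nra. Qed.

Section ConvexPos.

Variable F : R -> R.
Hypothesis F_convex : convex_pos F.

Lemma convex_pos_chord p q r : 0 < p < q -> q < r ->
  F q * (r - p) <= (r - q) * F p + (q - p) * F r.
Proof.
  intros Hpq Hqr. set (lam := (r - q) / (r - p)).
  assert (Hlam : 0 <= lam <= 1).
  { assert (E : 1 - lam = (q - p) / (r - p)) by (unfold lam; field; lra).
    assert (0 <= 1 - lam) by (rewrite E; apply Rdiv_le_0_compat; lra).
    assert (0 <= lam) by (apply Rdiv_le_0_compat; lra).
    lra. }
  pose proof (F_convex p r lam ltac:(lra) ltac:(lra) Hlam) as H.
  replace (lam * p + (1 - lam) * r) with q in H by (unfold lam; field; lra).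
  apply (Rmult_le_compat_r (r - p)) in H; [|lra].
  replace ((lam * F p + (1 - lam) * F r) * (r - p)) with ((r - q) * F p + (q - p) * F r)
    in H by (unfold lam; field; lra).
  exact H.
Qed.

Lemma convex_pos_slope_left p q r : 0 < p < q -> q < r -> slope F p q <= slope F p r.
Proof.
  intros Hpq Hqr. pose proof (convex_pos_chord p q r Hpq Hqr).
  assert (E : slope F p r - slope F p q
              = ((r - q) * F p + (q - p) * F r - F q * (r - p)) / ((q - p) * (r - p)))
    by (unfold slope; field; lra).
  assert (0 <= slope F p r - slope F p q) by (rewrite E; apply Rdiv_le_0_compat; nra).
  lra.
Qed.

Lemma convex_pos_slope_right p q r : 0 < p < q -> q < r -> slope F p r <= slope F q r.
Proof.
  intros Hpq Hqr. pose proof (convex_pos_chord p q r Hpq Hqr).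
  assert (E : slope F q r - slope F p r
              = ((r - q) * F p + (q - p) * F r - F q * (r - p)) / ((r - q) * (r - p)))
    by (unfold slope; field; lra).
  assert (0 <= slope F q r - slope F p r) by (rewrite E; apply Rdiv_le_0_compat; nra).
  lra.
Qed.

Lemma convex_pos_slope_le p q r : 0 < p < q -> q < r -> slope F p q <= slope F q r.
Proof.
  intros Hpq Hqr. apply (Rle_trans _ (slope F p r)).
  - now apply convex_pos_slope_left.
  - now apply convex_pos_slope_right.
Qed.

Lemma convex_pos_right_quotient x : 0 < x ->
  exists D, filterlim (right_quotient F x) (at_right 0) (locally D).
Proof.
  intros Hx. apply (ex_right_lim_of_monotone _ (slope F (x / 2) x)).
  - intros h1 h2 Hh.
    pose proof (convex_pos_slope_left x (x + h1) (x + h2) ltac:(lra) ltac:(lra)) as H.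
    unfold slope in H. unfold right_quotient.
    now replace (x + h1 - x) with h1 in H by ring; replace (x + h2 - x) with h2 in H by ring.
  - intros h Hh.
    pose proof (convex_pos_slope_le (x / 2) x (x + h) ltac:(lra) ltac:(lra)) as H.
    unfold slope at 2 in H. unfold right_quotient.
    now replace (x + h - x) with h in H by ring.
Qed.

End ConvexPos.

Section LogConvex.

Variable G : R -> R.
Hypothesis G_pos : forall x, 0 < x -> 0 < G x.
Hypothesis G_log_convex : convex_pos (fun x => ln (G x)).

Let L x := ln (G x).

Lemma log_convex_convex : convex_pos G.
Proof.
  intros u v lam Hu Hv Hlam.
  pose proof (convex_comb_pos u v lam Hu Hv Hlam) as Hw.
  rewrite <- (exp_ln (G (lam * u + (1 - lam) * v))), <- (exp_ln (G u)), <- (exp_ln (G v)) by auto.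
  eapply Rle_trans; [apply exp_le, G_log_convex; auto | apply exp_convex; exact Hlam].
Qed.

Lemma log_convex_right_quotient x : 0 < x ->
  filterlim (right_quotient G x) (at_right 0) (locally (Derive G x)).
Proof.
  intros Hx. destruct (convex_pos_right_quotient G log_convex_convex x Hx) as [D HD].
  now rewrite (Derive_of_right_quotient G x D HD).
Qed.

Lemma log_convex_increment x h : 0 < x -> 0 < h ->
  G (x + h) - G x = G x * (exp (h * slope L x (x + h)) - 1).
Proof.
  intros Hx Hh. unfold slope. replace (x + h - x) with h by ring.
  replace (h * ((L (x + h) - L x) / h)) with (L (x + h) - L x) by (field; lra).
  unfold L, Rminus. rewrite exp_plus, exp_Ropp, !exp_ln by (apply G_pos; lra).
  field. apply Rgt_not_eq, G_pos, Hx.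
Qed.

Lemma log_convex_Derive_lower w x : 0 < w < x -> slope L w x <= Derive G x / G x.
Proof.
  intros Hwx. set (S := slope L w x). assert (Hx : 0 < G x) by (apply G_pos; lra).
  assert (H : Rbar_le (G x * S) (Derive G x)).
  { apply (filterlim_le (F := at_right 0) (fun _ => G x * S) (right_quotient G x));
      [| apply filterlim_const | apply log_convex_right_quotient; lra].
    exists (mkposreal 1 Rlt_0_1). intros h _ Hh. unfold right_quotient.
    rewrite log_convex_increment by lra.
    pose proof (convex_pos_slope_le L G_log_convex w x (x + h) Hwx ltac:(lra)).
    set (u := h * slope L x (x + h)).
    assert (Hu : h * S <= u) by (unfold u, S; apply Rmult_le_compat_l; lra).
    pose proof (exp_ineq1_le u).
    apply (Rmult_le_reg_r h); [exact Hh|].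
    replace (G x * (exp u - 1) / h * h) with (G x * (exp u - 1)) by (field; lra).
    nra. }
  apply (Rmult_le_reg_l (G x)); [exact Hx|].
  replace (G x * (Derive G x / G x)) with (Derive G x) by (field; lra). exact H.
Qed.

Lemma log_convex_Derive_upper x v : 0 < x < v -> Derive G x / G x <= slope L x v.
Proof.
  intros Hxv. set (S := slope L x v). assert (Hx : 0 < G x) by (apply G_pos; lra).
  assert (H : Rbar_le (Derive G x) (G x * S)).
  { apply (filterlim_le (F := at_right 0) (right_quotient G x)
             (fun h => G x * right_quotient (fun h => exp (h * S)) 0 h));
      [| apply log_convex_right_quotient; lra |].
    - exists (mkposreal (v - x) ltac:(lra)). intros h Hball Hh.
      change (Rabs (h - 0) < v - x) in Hball. apply Rabs_lt_between in Hball.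
      unfold right_quotient. rewrite log_convex_increment, Rplus_0_l, Rmult_0_l, exp_0 by lra.
      pose proof (convex_pos_slope_left L G_log_convex x (x + h) v ltac:(lra) ltac:(lra)).
      unfold Rdiv. rewrite <- Rmult_assoc.
      apply Rmult_le_compat_r; [apply Rlt_le, Rinv_0_lt_compat, Hh|].
      apply Rmult_le_compat_l; [lra|].
      apply Rplus_le_compat_r, exp_le, Rmult_le_compat_l; unfold S; lra.
    - apply filterlim_Rmult; [apply filterlim_const|].
      apply right_quotient_of_is_derive.
      auto_derive; [exact I | rewrite Rmult_0_l, exp_0; ring]. }
  apply (Rmult_le_reg_l (G x)); [exact Hx|].
  replace (G x * (Derive G x / G x)) with (Derive G x) by (field; lra). exact H.
Qed.

Lemma log_convex_Derive_ratio_le u v : 0 < u <= v -> Derive G u / G u <= Derive G v / G v.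
Proof.
  intros [Hu [Huv | <-]]; [| lra].
  apply (Rle_trans _ (slope L u v)).
  - now apply log_convex_Derive_upper.
  - now apply log_convex_Derive_lower.
Qed.

End LogConvex.

(** * Improper integrals over (0, +oo) *)

Definition is_RInt_0_pinfty (f : R -> R) (l : R) : Prop :=
  @is_RInt_gen R_NormedModule f (at_right 0) (Rbar_locally p_infty) l.

Lemma at_right_0_pinfty_ordered :
  filter_prod (at_right 0) (Rbar_locally p_infty) (fun ab => 0 < fst ab < snd ab).
Proof.
  apply (Filter_prod _ _ _ (fun a => 0 < a < 1) (fun b => 1 < b)).
  - exists (mkposreal 1 Rlt_0_1). intros a Ha Hpos. split; [exact Hpos|].
    change (Rabs (a - 0) < 1) in Ha. apply Rabs_lt_between in Ha. lra.
  - exists 1. tauto.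
  - intros a b Ha Hb. simpl. lra.
Qed.

Lemma is_RInt_0_pinfty_ext (f g : R -> R) l : (forall x, 0 < x -> f x = g x) ->
  is_RInt_0_pinfty f l -> is_RInt_0_pinfty g l.
Proof.
  intros Hfg.
  apply (is_RInt_gen_ext (V := R_NormedModule) (Fa := at_right 0) (Fb := Rbar_locally p_infty)
           f g l).
  eapply filter_imp; [| exact at_right_0_pinfty_ordered]. intros [a b] Hab x Hx. simpl in *.
  rewrite Rmin_left, Rmax_right in Hx by lra. apply Hfg. lra.
Qed.

Lemma is_RInt_0_pinfty_plus (f g : R -> R) lf lg :
  is_RInt_0_pinfty f lf -> is_RInt_0_pinfty g lg ->
  is_RInt_0_pinfty (fun x => f x + g x) (lf + lg).
Proof. exact (is_RInt_gen_plus f g lf lg). Qed.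

Lemma is_RInt_0_pinfty_scal (f : R -> R) c l :
  is_RInt_0_pinfty f l -> is_RInt_0_pinfty (fun x => c * f x) (c * l).
Proof. exact (is_RInt_gen_scal f c l). Qed.

Lemma is_RInt_0_pinfty_le (f g : R -> R) lf lg : (forall x, 0 < x -> 0 <= f x <= g x) ->
  is_RInt_0_pinfty f lf -> is_RInt_0_pinfty g lg -> lf <= lg.
Proof.
  intros Hfg Hf Hg. apply (Rle_trans _ (norm lf)); [apply Rle_abs|].
  apply (RInt_gen_norm (Fa := at_right 0) (Fb := Rbar_locally p_infty) f g lf lg);
    [| | exact Hf | exact Hg];
    (eapply filter_imp; [| exact at_right_0_pinfty_ordered]); intros [a b] Hab; simpl in *.
  - lra.
  - intros x Hx. destruct (Hfg x ltac:(lra)). change (Rabs (f x) <= g x).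
    rewrite Rabs_pos_eq; lra.
Qed.

Lemma ex_RInt_continuous_pos (f : R -> R) a b :
  (forall x, 0 < x -> continuous f x) -> 0 < a -> a <= b -> ex_RInt f a b.
Proof.
  intros Hf Ha Hab. apply (ex_RInt_continuous (V := R_CompleteNormedModule)). intros x Hx.
  rewrite Rmin_left in Hx by lra. apply Hf. lra.
Qed.

Lemma is_RInt_0_pinfty_of_bounded (f : R -> R) M :
  (forall x, 0 < x -> continuous f x) -> (forall x, 0 < x -> 0 <= f x) ->
  (forall a b, 0 < a -> a <= b -> RInt f a b <= M) ->
  exists l, is_RInt_0_pinfty f l /\ forall a b, 0 < a -> a <= b -> RInt f a b <= l.
Proof.
  intros Hcont Hpos HM.
  assert (Hmono : forall a a' b' b, 0 < a <= a' -> a' <= b' <= b -> RInt f a' b' <= RInt f a b).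
  { intros a a' b' b Ha Hb.
    assert (Hex : forall c d, a <= c <= d -> ex_RInt f c d)
      by (intros c d Hcd; apply ex_RInt_continuous_pos; auto; lra).
    rewrite <- (RInt_Chasles (V := R_CompleteNormedModule) f a a' b),
      <- (RInt_Chasles (V := R_CompleteNormedModule) f a' b' b) by (apply Hex; lra).
    assert (Hge : forall c d, a <= c <= d -> 0 <= RInt f c d).
    { intros c d Hcd. apply RInt_ge_0; [lra | apply Hex; lra | intros; apply Hpos; lra]. }
    pose proof (Hge a a' ltac:(lra)). pose proof (Hge b' b ltac:(lra)).
    change plus with Rplus. lra. }
  set (E y := exists a b, 0 < a <= b /\ y = RInt f a b).
  assert (HE : bound E) by (exists M; intros y (a & b & Hab & ->); apply HM; lra).
  assert (HE1 : E (RInt f 1 2)) by (exists 1, 2; split; [lra | reflexivity]).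
  destruct (completeness E HE (ex_intro _ _ HE1)) as [l [Hub Hleast]].
  exists l. split; [| intros a b Ha Hab; apply Hub; exists a, b; split; [lra | reflexivity]].
  intros P [eps HP].
  assert (Hab0 : exists a0 b0, 0 < a0 <= b0 /\ l - eps < RInt f a0 b0).
  { apply NNPP. intros Hno. assert (Hub' : is_upper_bound E (l - eps)).
    { intros y (a & b & Hab & ->). apply Rnot_lt_le. intros Hlt. apply Hno. now exists a, b. }
    specialize (Hleast _ Hub'). pose proof (cond_pos eps). lra. }
  destruct Hab0 as (a0 & b0 & Hab0 & Hl0).
  apply (Filter_prod _ _ _ (fun a => 0 < a <= a0) (fun b => b0 < b)).
  - exists (mkposreal a0 (proj1 Hab0)). intros a Ha Ha0. split; [exact Ha0|].
    change (Rabs (a - 0) < a0) in Ha. apply Rabs_lt_between in Ha. lra.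
  - exists b0. tauto.
  - intros a b Ha Hb. exists (RInt f a b). split.
    + apply (RInt_correct (V := R_CompleteNormedModule)), ex_RInt_continuous_pos; auto; lra.
    + apply HP. change (Rabs (RInt f a b - l) < eps). apply Rabs_lt_between.
      assert (RInt f a b <= l) by (apply Hub; exists a, b; split; [lra | reflexivity]).
      pose proof (Hmono a a0 b0 b ltac:(lra) ltac:(lra)). lra.
Qed.

Lemma is_RInt_0_pinfty_derive (F f : R -> R) La Lb :
  (forall x, 0 < x -> is_derive F x (f x)) -> (forall x, 0 < x -> continuous f x) ->
  filterlim F (at_right 0) (locally La) -> filterlim F (Rbar_locally p_infty) (locally Lb) ->
  is_RInt_0_pinfty f (Lb - La).
Proof.
  intros Hder Hcont HLa HLb P HP.
  assert (Hlim : filterlim (fun ab => F (snd ab) + - F (fst ab))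
                   (filter_prod (at_right 0) (Rbar_locally p_infty)) (locally (Lb + - La))).
  { apply filterlim_Rplus.
    - eapply filterlim_comp; [apply filterlim_snd | exact HLb].
    - eapply filterlim_comp; [eapply filterlim_comp; [apply filterlim_fst | exact HLa] |].
      apply (filterlim_Rbar_opp La). }
  specialize (Hlim P HP). unfold filtermap in Hlim.
  generalize (filter_and _ _ Hlim at_right_0_pinfty_ordered).
  unfold filtermapi. apply filter_imp. intros [a b] [HPab Hab]. simpl in HPab, Hab.
  exists (F b - F a). split; [| exact HPab].
  apply (is_RInt_derive (V := R_CompleteNormedModule) F f a b); intros x Hx;
    rewrite Rmin_left, Rmax_right in Hx by lra.
  - apply Hder. lra.
  - apply Hcont. lra.
Qed.

Lemma is_RInt_gen_comp_R {Fa Fb Ga Gb : (R -> Prop) -> Prop} {FFa : Filter Fa} {FFb : Filter Fb}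
  (f g dg : R -> R) (l : R) :
  filterlim g Fa Ga -> filterlim g Fb Gb ->
  filter_prod Fa Fb (fun ab => forall x, Rmin (fst ab) (snd ab) <= x <= Rmax (fst ab) (snd ab) ->
    continuous f (g x) /\ is_derive g x (dg x) /\ continuous dg x) ->
  is_RInt_gen f Ga Gb l -> is_RInt_gen (fun x => dg x * f (g x)) Fa Fb l.
Proof.
  intros Hga Hgb Hreg Hf P HP.
  assert (Hpair : filterlim (fun ab => (g (fst ab), g (snd ab)))
                    (filter_prod Fa Fb) (filter_prod Ga Gb)).
  { apply filterlim_pair.
    - eapply filterlim_comp; [apply filterlim_fst | exact Hga].
    - eapply filterlim_comp; [apply filterlim_snd | exact Hgb]. }
  specialize (Hpair _ (Hf P HP)). unfold filtermap in Hpair.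
  generalize (filter_and _ _ Hpair Hreg).
  unfold filtermapi. apply filter_imp. intros [a b] [[y [Hy HPy]] Hab]. simpl in Hy, Hab.
  exists y. split; [| exact HPy].
  rewrite <- (is_RInt_unique (V := R_CompleteNormedModule) _ _ _ _ Hy).
  apply (is_RInt_comp (V := R_CompleteNormedModule) f g dg a b); intros x Hx; apply Hab; exact Hx.
Qed.

(** * The Gamma and digamma functions *)

Definition Gamma_integrand (t s : R) : R := exp (- s) * Rpower s (t - 1).

Lemma Gamma_integrand_pos t s : 0 < Gamma_integrand t s.
Proof. apply Rmult_lt_0_compat; [apply exp_pos | apply Rpower_pos]. Qed.

Lemma continuous_Gamma_integrand t s : 0 < s -> continuous (Gamma_integrand t) s.
Proof.
  intros Hs. apply (continuous_mult (K := R_AbsRing)); [| now apply continuous_Rpower].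
  apply (ex_derive_continuous (K := R_AbsRing) (V := R_NormedModule)). auto_derive. exact I.
Qed.

Lemma Gamma_unique t l : is_RInt_0_pinfty (Gamma_integrand t) l -> Gamma t = l.
Proof.
  intros H. unfold Gamma.
  now apply (is_RInt_gen_unique (V := R_CompleteNormedModule) (Fa := at_right 0)).
Qed.

(* The primitive [s |-> (s / (1 + s)) ^ t / t] of [Gamma_dominant t] stays in
   [[0, 1 / t]], and [Gamma_integrand t] is dominated by a multiple of it. *)
Definition Gamma_dominant (t s : R) : R := Rpower (s / (1 + s)) t / (s * (1 + s)).

Lemma is_derive_Gamma_dominant_primitive t s : 0 < t -> 0 < s ->
  is_derive (fun s => Rpower (s / (1 + s)) t / t) s (Gamma_dominant t s).
Proof.
  intros Ht Hs. unfold Gamma_dominant, Rpower. auto_derive.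
  - repeat split; [lra | apply Rdiv_lt_0_compat; lra].
  - unfold Rdiv. field. lra.
Qed.

Lemma continuous_Gamma_dominant t s : 0 < s -> continuous (Gamma_dominant t) s.
Proof.
  intros Hs. apply (ex_derive_continuous (K := R_AbsRing) (V := R_NormedModule)).
  unfold Gamma_dominant, Rpower. auto_derive.
  repeat split; [lra | apply Rdiv_lt_0_compat; lra | apply Rgt_not_eq; nra].
Qed.

Lemma RInt_Gamma_dominant_le t a b : 0 < t -> 0 < a -> a <= b ->
  RInt (Gamma_dominant t) a b <= / t.
Proof.
  intros Ht Ha Hab. set (A s := Rpower (s / (1 + s)) t / t).
  assert (HA : forall s, 0 < s -> 0 <= A s <= / t).
  { intros s Hs. unfold A, Rdiv. split.
    - apply Rlt_le, Rmult_lt_0_compat; [apply Rpower_pos | apply Rinv_0_lt_compat, Ht].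
    - rewrite <- (Rmult_1_l (/ t)) at 2.
      apply Rmult_le_compat_r; [apply Rlt_le, Rinv_0_lt_compat, Ht|].
      replace 1 with (Rpower 1 t) at 2
        by (unfold Rpower; rewrite ln_1, Rmult_0_r, exp_0; reflexivity).
      apply Rle_Rpower_l; [lra | split].
      + apply Rmult_lt_0_compat; [exact Hs | apply Rinv_0_lt_compat; lra].
      + apply (Rmult_le_reg_r (1 + s)); [lra|]. rewrite Rmult_assoc, Rinv_l; lra. }
  assert (Hint : is_RInt (Gamma_dominant t) a b (A b - A a)).
  { apply (is_RInt_derive (V := R_CompleteNormedModule) A); intros x Hx;
      rewrite Rmin_left, Rmax_right in Hx by lra.
    - apply is_derive_Gamma_dominant_primitive; lra.
    - apply continuous_Gamma_dominant; lra. }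
  rewrite (is_RInt_unique (V := R_CompleteNormedModule) _ _ _ _ Hint).
  destruct (HA a Ha), (HA b ltac:(lra)). lra.
Qed.

Lemma Gamma_integrand_le_dominant t :
  exists C, 0 <= C /\ forall s, 0 < s -> Gamma_integrand t s <= C * Gamma_dominant t s.
Proof.
  destruct (exp_neg_mul_Rpower_bounded (t + 1)) as [C HC]. exists C. split.
  { eapply Rle_trans; [| apply (HC 0); lra].
    apply Rlt_le, Rmult_lt_0_compat; [apply exp_pos | apply Rpower_pos]. }
  intros s Hs.
  assert (E : Gamma_integrand t s = exp (- s) * Rpower (1 + s) (t + 1) * Gamma_dominant t s).
  { unfold Gamma_integrand, Gamma_dominant.
    rewrite Rpower_minus_1, Rpower_plus, Rpower_1 by lra.
    replace (Rpower (s / (1 + s)) t) with (Rpower s t / Rpower (1 + s) t)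
      by (unfold Rpower; rewrite ln_div, Rmult_minus_distr_l by lra;
          unfold Rminus; rewrite exp_plus, exp_Ropp; reflexivity).
    field. repeat split; try lra. apply Rgt_not_eq, Rpower_pos. }
  rewrite E. apply Rmult_le_compat_r; [| apply HC; lra].
  unfold Gamma_dominant. apply Rlt_le, Rdiv_lt_0_compat; [apply Rpower_pos | nra].
Qed.

Lemma Gamma_integrand_RInt_bounded t : 0 < t ->
  exists M, forall a b, 0 < a -> a <= b -> RInt (Gamma_integrand t) a b <= M.
Proof.
  intros Ht. destruct (Gamma_integrand_le_dominant t) as [C [HC0 HC]].
  exists (C * / t). intros a b Ha Hab.
  assert (Hex : ex_RInt (Gamma_dominant t) a b).
  { apply ex_RInt_continuous_pos; [| exact Ha | exact Hab].
    intros s Hs. now apply continuous_Gamma_dominant. }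
  apply (Rle_trans _ (RInt (fun s => C * Gamma_dominant t s) a b)).
  - apply RInt_le; [exact Hab | | now apply (ex_RInt_scal (V := R_NormedModule)) |].
    + apply ex_RInt_continuous_pos; [| exact Ha | exact Hab].
      intros s Hs. now apply continuous_Gamma_integrand.
    + intros s Hs. apply HC. lra.
  - rewrite (RInt_scal (V := R_CompleteNormedModule)) by exact Hex.
    apply Rmult_le_compat_l; [exact HC0 | now apply RInt_Gamma_dominant_le].
Qed.

Lemma Gamma_correct t : 0 < t -> is_RInt_0_pinfty (Gamma_integrand t) (Gamma t) /\ 0 < Gamma t.
Proof.
  intros Ht. destruct (Gamma_integrand_RInt_bounded t Ht) as [M HM].
  destruct (is_RInt_0_pinfty_of_bounded (Gamma_integrand t) M) as [l [Hl Hsup]];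
    [apply continuous_Gamma_integrand | intros; apply Rlt_le, Gamma_integrand_pos | exact HM |].
  rewrite (Gamma_unique t l Hl). split; [exact Hl|].
  eapply Rlt_le_trans; [| apply (Hsup 1 2); lra].
  apply RInt_gt_0; [lra | intros; apply Gamma_integrand_pos |].
  intros s Hs. apply continuous_Gamma_integrand. lra.
Qed.

Lemma Gamma_pos t : 0 < t -> 0 < Gamma t.
Proof. intros Ht. apply (Gamma_correct t Ht). Qed.

Lemma Gamma_succ x : 0 < x -> Gamma (x + 1) = x * Gamma x.
Proof.
  intros Hx. set (g s := exp (- s) * Rpower s x).
  assert (Hdiff : is_RInt_0_pinfty (fun s => Gamma_integrand (x + 1) s - x * Gamma_integrand x s)
                    (- 0 - - 0)).
  { apply (is_RInt_0_pinfty_derive (fun s => - g s)).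
    - intros s Hs. unfold g, Gamma_integrand.
      replace (x + 1 - 1) with x by ring. rewrite Rpower_minus_1 by exact Hs.
      unfold Rpower. auto_derive; [exact Hs | field; lra].
    - intros s Hs.
      apply (continuous_minus (V := R_NormedModule) (Gamma_integrand (x + 1))
               (fun s => x * Gamma_integrand x s));
        [| apply (continuous_scal_r (K := R_AbsRing) (V := R_NormedModule) x)];
        now apply continuous_Gamma_integrand.
    - eapply filterlim_comp; [now apply filterlim_exp_neg_mul_Rpower_at_right_0 |].
      apply (filterlim_Rbar_opp 0).
    - eapply filterlim_comp; [apply filterlim_exp_neg_mul_Rpower_pinfty |].
      apply (filterlim_Rbar_opp 0). }
  destruct (Gamma_correct x Hx) as [HGx _].
  assert (H : is_RInt_0_pinfty (Gamma_integrand (x + 1)) (- 0 - - 0 + x * Gamma x)).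
  { refine (is_RInt_0_pinfty_ext _ _ _ _ (is_RInt_0_pinfty_plus _ _ _ _ Hdiff
                                            (is_RInt_0_pinfty_scal _ x _ HGx))).
    intros s _. ring. }
  rewrite (Gamma_unique _ _ H). ring.
Qed.

Lemma Gamma_integrand_exp t s : 0 < s -> Gamma_integrand t s = exp (- s + (t - 1) * ln s).
Proof. intros Hs. unfold Gamma_integrand, Rpower. now rewrite exp_plus. Qed.

(* Hoelder's inequality for [Gamma], done pointwise: this bound integrates to
   [Gamma (lam * u + (1 - lam) * v) <= Gamma u ^ lam * Gamma v ^ (1 - lam)]. *)
Lemma Gamma_integrand_mix_le u v lam A B s : 0 < A -> 0 < B -> 0 <= lam <= 1 -> 0 < s ->
  let K := exp (lam * ln A + (1 - lam) * ln B) in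
  Gamma_integrand (lam * u + (1 - lam) * v) s
  <= K * lam / A * Gamma_integrand u s + K * (1 - lam) / B * Gamma_integrand v s.
Proof.
  intros HA HB Hlam Hs K. rewrite !Gamma_integrand_exp by exact Hs.
  set (X := - s + (u - 1) * ln s - ln A). set (Y := - s + (v - 1) * ln s - ln B).
  replace (- s + (lam * u + (1 - lam) * v - 1) * ln s)
    with (lam * ln A + (1 - lam) * ln B + (lam * X + (1 - lam) * Y)) by (unfold X, Y; ring).
  replace (- s + (u - 1) * ln s) with (ln A + X) by (unfold X; ring).
  replace (- s + (v - 1) * ln s) with (ln B + Y) by (unfold Y; ring).
  rewrite (exp_plus (lam * ln A + (1 - lam) * ln B)). fold K.
  rewrite (exp_plus (ln A)), (exp_plus (ln B)), !exp_ln by assumption.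
  replace (K * lam / A * (A * exp X) + K * (1 - lam) / B * (B * exp Y))
    with (K * (lam * exp X + (1 - lam) * exp Y)) by (field; lra).
  apply Rmult_le_compat_l; [apply Rlt_le, exp_pos | now apply exp_convex].
Qed.

Lemma Gamma_log_convex : convex_pos (fun x => ln (Gamma x)).
Proof.
  intros u v lam Hu Hv Hlam. cbv beta.
  pose proof (convex_comb_pos u v lam Hu Hv Hlam) as Hw.
  destruct (Gamma_correct u Hu) as [HGu Gu]. destruct (Gamma_correct v Hv) as [HGv Gv].
  destruct (Gamma_correct _ Hw) as [HGw Gw].
  set (K := exp (lam * ln (Gamma u) + (1 - lam) * ln (Gamma v))).
  set (cu := K * lam / Gamma u). set (cv := K * (1 - lam) / Gamma v).
  assert (Hmix : is_RInt_0_pinfty (fun s => cu * Gamma_integrand u s + cv * Gamma_integrand v s) K).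
  { replace K with (cu * Gamma u + cv * Gamma v) by (unfold cu, cv; field; lra).
    exact (is_RInt_0_pinfty_plus _ _ _ _ (is_RInt_0_pinfty_scal _ cu _ HGu)
             (is_RInt_0_pinfty_scal _ cv _ HGv)). }
  assert (HwK : Gamma (lam * u + (1 - lam) * v) <= K).
  { refine (is_RInt_0_pinfty_le _ _ _ _ _ HGw Hmix). intros s Hs. split.
    - apply Rlt_le, Gamma_integrand_pos.
    - now apply Gamma_integrand_mix_le. }
  unfold K in HwK. rewrite <- (ln_exp (lam * ln (Gamma u) + (1 - lam) * ln (Gamma v))).
  now apply ln_le.
Qed.

Lemma Gamma_right_quotient x : 0 < x ->
  filterlim (right_quotient Gamma x) (at_right 0) (locally (Derive Gamma x)).
Proof. exact (log_convex_right_quotient Gamma Gamma_pos Gamma_log_convex x). Qed.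

Lemma psi_le u v : 0 < u <= v -> psi u <= psi v.
Proof. exact (log_convex_Derive_ratio_le Gamma Gamma_pos Gamma_log_convex u v). Qed.

Lemma psi_succ z : 0 < z -> psi (z + 1) = psi z + / z.
Proof.
  intros Hz.
  assert (H : filterlim (right_quotient Gamma (z + 1)) (at_right 0)
                (locally (Gamma z + z * Derive Gamma z))).
  { apply (filterlim_ext_loc (fun h => Gamma (z + h) + z * right_quotient Gamma z h)).
    - exists (mkposreal 1 Rlt_0_1). intros h _ Hh. unfold right_quotient.
      replace (z + 1 + h) with (z + h + 1) by ring. rewrite !Gamma_succ by lra. field. lra.
    - apply filterlim_Rplus.
      + eapply right_continuous_of_right_quotient, Gamma_right_quotient, Hz.
      + apply filterlim_Rmult; [apply filterlim_const | now apply Gamma_right_quotient]. }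
  pose proof (Gamma_pos z Hz).
  unfold psi. rewrite (Derive_of_right_quotient _ _ _ H), Gamma_succ by exact Hz.
  field. lra.
Qed.

Lemma ln_le_psi_succ x : 0 < x -> ln x <= psi (x + 1).
Proof.
  intros Hx. pose proof (log_convex_Derive_lower Gamma Gamma_pos Gamma_log_convex x (x + 1)
                          ltac:(lra)) as H.
  unfold slope in H. fold (psi (x + 1)) in H.
  rewrite Gamma_succ, ln_mult in H by (try apply Gamma_pos; lra).
  replace ((ln x + ln (Gamma x) - ln (Gamma x)) / (x + 1 - x)) with (ln x) in H by (field; lra).
  exact H.
Qed.

Lemma psi_nat_succ n : psi (INR (S n) + 1) = psi 1 + sum_f_R0 (fun i => / INR (S i)) n.
Proof.
  induction n as [| n IHn].
  - simpl. rewrite psi_succ, Rinv_1 by lra. reflexivity.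
  - rewrite tech5, psi_succ, (S_INR (S n)), IHn by (apply lt_0_INR; lia). ring.
Qed.

(* [euler_gamma] is [real (Lim_seq _)], so convergence has to be proved: the
   sequence decreases and is bounded below by [- psi 1]. *)
Lemma neg_euler_gamma_le_psi_1 : - euler_gamma <= psi 1.
Proof.
  set (c n := sum_f_R0 (fun i => / INR (S i)) n - ln (INR (S n))).
  assert (Hlow : forall n, - psi 1 <= c n).
  { intros n. pose proof (ln_le_psi_succ (INR (S n)) ltac:(apply lt_0_INR; lia)).
    rewrite psi_nat_succ in H. unfold c. lra. }
  assert (Hdecr : forall n, c (S n) <= c n).
  { intros n. unfold c. rewrite tech5.
    set (m := INR (S n)). assert (Hm : 0 < m) by (apply lt_0_INR; lia).
    replace (INR (S (S n))) with (m + 1) by (unfold m; rewrite (S_INR (S n)); ring).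
    pose proof (exp_ineq1_le (ln m - ln (m + 1))) as H.
    unfold Rminus in H. rewrite exp_plus, exp_Ropp, !exp_ln in H by lra.
    assert (m * / (m + 1) = 1 - / (m + 1)) by (field; lra). lra. }
  destruct (ex_finite_lim_seq_decr c (- psi 1) Hdecr Hlow) as [l Hl].
  assert (E : euler_gamma = l)
    by (unfold euler_gamma; fold c; now rewrite (is_lim_seq_unique _ _ Hl)).
  pose proof (is_lim_seq_le (fun _ => - psi 1) c (- psi 1) l Hlow (is_lim_seq_const _) Hl).
  simpl in H. lra.
Qed.

(** * The k-Gamma function *)

Lemma Gamma_k_integrand_eq k t u : 0 < k -> 0 < u ->
  exp (- Rpower u k / k) * Rpower u (t - 1)
  = Rpower k (t / k - 1) * (Rpower u (k - 1) * Gamma_integrand (t / k) (Rpower u k / k)).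
Proof.
  intros Hk Hu. unfold Gamma_integrand.
  replace (- (Rpower u k / k)) with (- Rpower u k / k) by (field; lra).
  unfold Rpower at 2 3 4 6. rewrite ln_div, ln_Rpower by (try apply Rpower_pos; lra).
  rewrite (Rmult_comm (exp (- Rpower u k / k))), <- !Rmult_assoc, <- !exp_plus.
  f_equal. field. lra.
Qed.

Lemma Gamma_k_eq k t : 0 < k -> 0 < t -> Gamma_k k t = Rpower k (t / k - 1) * Gamma (t / k).
Proof.
  intros Hk Ht. set (phi u := Rpower u k / k).
  assert (Htk : 0 < t / k) by (apply Rdiv_lt_0_compat; lra).
  assert (Hsub : is_RInt_0_pinfty (fun u => Rpower u (k - 1) * Gamma_integrand (t / k) (phi u))
                   (Gamma (t / k))).
  { apply (is_RInt_gen_comp_R (Ga := at_right 0) (Gb := Rbar_locally p_infty)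
             (Gamma_integrand (t / k)) phi (fun u => Rpower u (k - 1)));
      [| | | apply Gamma_correct, Htk].
    - apply (filterlim_comp _ _ _ (fun u => Rpower u k) (fun h => h / k) _ (at_right 0)).
      + now apply filterlim_Rpower_at_right_0.
      + now apply filterlim_div_at_right_0.
    - apply (filterlim_comp _ _ _ (fun u => Rpower u k) (fun h => h / k) _ (Rbar_locally p_infty)).
      + now apply filterlim_Rpower_pinfty.
      + now apply filterlim_div_pinfty.
    - eapply filter_imp; [| exact at_right_0_pinfty_ordered]. intros [a b] Hab x Hx. simpl in *.
      rewrite Rmin_left, Rmax_right in Hx by lra. split; [| split].
      + apply continuous_Gamma_integrand. apply Rdiv_lt_0_compat; [apply Rpower_pos | exact Hk].
      + unfold phi. rewrite Rpower_minus_1 by lra. unfold Rpower.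
        auto_derive; [lra | field; lra].
      + apply continuous_Rpower. lra. }
  unfold Gamma_k. apply (is_RInt_gen_unique (V := R_CompleteNormedModule) (Fa := at_right 0)).
  refine (is_RInt_0_pinfty_ext _ _ _ _ (is_RInt_0_pinfty_scal _ (Rpower k (t / k - 1)) _ Hsub)).
  intros u Hu. symmetry. now apply Gamma_k_integrand_eq.
Qed.

Lemma psi_k_eq k x : 0 < k -> 0 < x -> psi_k k x = ln k / k + psi (x / k) / k.
Proof.
  intros Hk Hx. set (c s := Rpower k (s / k - 1)). set (y := x / k).
  assert (Hy : 0 < y) by (apply Rdiv_lt_0_compat; lra).
  assert (Hc : is_derive c x (ln k / k * c x)).
  { unfold c, Rpower. auto_derive; [exact I|].
    replace (x * / k + - (1)) with (x / k - 1) by (unfold Rdiv; ring). field. lra. }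
  assert (Hq : filterlim (right_quotient (Gamma_k k) x) (at_right 0)
                 (locally (c x * (/ k * Derive Gamma y) + Gamma y * (ln k / k * c x)))).
  { apply (filterlim_ext_loc (fun h => c (x + h) * (/ k * right_quotient Gamma y (h / k))
                                       + Gamma y * right_quotient c x h)).
    - exists (mkposreal 1 Rlt_0_1). intros h _ Hh. unfold right_quotient.
      rewrite !Gamma_k_eq by lra. fold (c (x + h)) (c x) y.
      replace ((x + h) / k) with (y + h / k) by (unfold y; field; lra).
      field. lra.
    - apply filterlim_Rplus; apply filterlim_Rmult.
      + exact (right_continuous_of_right_quotient _ _ _ (right_quotient_of_is_derive _ _ _ Hc)).
      + apply filterlim_Rmult; [apply filterlim_const|].
        eapply filterlim_comp;
          [now apply filterlim_div_at_right_0 | now apply Gamma_right_quotient].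
      + apply filterlim_const.
      + now apply right_quotient_of_is_derive. }
  assert (Hcx : 0 < c x) by apply Rpower_pos. pose proof (Gamma_pos y Hy).
  unfold psi_k, psi. rewrite (Derive_of_right_quotient _ _ _ Hq), Gamma_k_eq by lra. fold (c x) y.
  field. lra.
Qed.

Theorem lemma3p6 (a b k alpha beta t : R) :
  0 < b -> b <= a -> 1 <= k -> 0 < alpha + beta * t ->
  (k * a * euler_gamma - b * euler_gamma) / k + b / k * ln k
  + (a - b) / (alpha + beta * t)
  + a * psi (alpha + beta * t) - b * psi_k k (alpha + beta * t) >= 0.
Proof.
  intros Hb Hab Hk Hx. set (x := alpha + beta * t) in *.
  set (y := x / k). assert (Hy : 0 < y) by (apply Rdiv_lt_0_compat; lra).
  assert (Hyx : y <= x).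
  { apply (Rmult_le_reg_l k); [lra|]. unfold y. replace (k * (x / k)) with x by (field; lra). nra. }
  rewrite psi_k_eq by lra. fold y.
  set (A := euler_gamma + psi (x + 1)). set (B := euler_gamma + psi (y + 1)).
  assert (E : (k * a * euler_gamma - b * euler_gamma) / k + b / k * ln k + (a - b) / x
              + a * psi x - b * (ln k / k + psi y / k) = a * A - b / k * B).
  { unfold A, B. rewrite (psi_succ x Hx), (psi_succ y Hy). unfold y. field. lra. }
  rewrite E.
  assert (HB : 0 <= B).
  { pose proof neg_euler_gamma_le_psi_1. pose proof (psi_le 1 (y + 1) ltac:(lra)). unfold B. lra. }
  assert (HBA : B <= A) by (apply Rplus_le_compat_l, psi_le; lra).
  assert (Hbk : 0 < b / k <= a).
  { split; [apply Rdiv_lt_0_compat; lra|].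
    apply (Rmult_le_reg_l k); [lra|]. replace (k * (b / k)) with b by (field; lra). nra. }
  nra.
Qed.
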